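(* Let $n\ge 6$, $4\le p\le n-1$, and let $K_{n+1}=(V,E)$ be the complete graph on $V=\{0,\dots,n\}$. If $c\in\mathbb{R}^E$ and $c_0\in\mathbb{R}$ are such that $c^\top y=c_0$ for the incidence vector $y$ of every $[0,n]$-$p$-path, then there are $\alpha,\beta,\gamma\in\mathbb{R}$ with $c_{0i}=\alpha$ and $c_{in}=\beta$ for all $i\in\{1,\dots,n-1\}$, and $c_{ij}=\gamma$ for all distinct $i,j\in\{1,\dots,n-1\}$.
   Context: For an undirected graph $G=(V,E)$ with $V=\{0,\dots,n\}$, a $[0,n]$-$p$-path is a simple (undirected) path from $0$ to $n$ with exactly $p$ edges. $c_{ij}$ denotes the entry of $c$ for the edge $[i,j]$. *)

From mathcomp Require Import all_boot all_order all_algebra.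
Set Implicit Arguments. Unset Strict Implicit. Unset Printing Implicit Defensive.
Import GRing.Theory Num.Theory.
Local Open Scope ring_scope.

Definition is_edge (n : nat) (e : {set 'I_n.+1}) : bool := #|e| == 2.

Definition walk_edges (n : nat) (s : seq 'I_n.+1) : seq {set 'I_n.+1} :=
  match s with
  | [::] => [::]
  | x :: t => pairmap (fun a b => [set a; b]) x t
  end.

(* In K_{n+1} every pair of
   distinct vertices is adjacent, so distinctness of vertices suffices. *)
Definition is_0n_p_path (n p : nat) (s : seq 'I_n.+1) : bool :=
  [&& uniq s, size s == p.+1, head ord0 s == ord0 & last ord0 s == ord_max].

Definition incidence (R : numDomainType) (n : nat) (s : seq 'I_n.+1)
  (e : {set 'I_n.+1}) : R :=
  if e \in walk_edges s then 1 else 0.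

Definition dotE (R : numDomainType) (n : nat) (c y : {set 'I_n.+1} -> R) : R :=
  \sum_(e : {set 'I_n.+1} | is_edge e) c e * y e.

From mathcomp Require Import all_boot all_order all_algebra.
From mathcomp Require Import zify lra.
Import GRing.Theory Num.Theory.
Set Implicit Arguments. Unset Strict Implicit. Unset Printing Implicit Defensive.
Local Open Scope ring_scope.

(* Replacing one interior vertex a of a [0,n]-p-path by an unused interior
   vertex u gives another [0,n]-p-path, so equal path costs force
   c_{xa} + c_{ay} = c_{xu} + c_{uy}, where x, y are the neighbours of a.
   Two such exchanges on four interior vertices show that disjoint interior
   edges have equal cost.  Two interior edges sharing a vertex are both
   disjoint from some third interior edge, as there are at least five interior
   vertices, so all interior edges cost the same gamma.  Exchanging the first
   (resp. last) interior vertex of a path then shows that c_{0i} (resp. c_{in})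
   does not depend on i. *)

Section WalkEdges.
Variable n : nat.

Lemma mem_walk_edges (x : 'I_n.+1) t e z :
  e \in walk_edges (x :: t) -> z \in e -> z \in x :: t.
Proof.
elim: t x => [|y t IH] x //=; rewrite in_cons => /orP[/eqP->|/IH mem_z].
  by rewrite !inE => /orP[] ->; rewrite ?orbT.
by move=> /mem_z z_in; rewrite in_cons z_in orbT.
Qed.

Lemma walk_edges_uniq (s : seq 'I_n.+1) : uniq s -> uniq (walk_edges s).
Proof.
case: s => [|x t] //; elim: t x => [|y t IH] x //= /andP[x_notin /andP[y_notin t_uniq]].
rewrite IH /= ?y_notin ?t_uniq // andbT.
by apply: contra x_notin => /(mem_walk_edges (z := x)); apply; rewrite !inE eqxx.
Qed.

Lemma walk_edges_is_edge (s : seq 'I_n.+1) e : uniq s -> e \in walk_edges s -> is_edge e.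
Proof.
case: s => [|x t] //; elim: t x => [|y t IH] x //= /andP[x_notin /andP[y_notin t_uniq]].
rewrite in_cons => /orP[/eqP->|]; last by apply: IH; rewrite /= y_notin t_uniq.
by rewrite /is_edge cards2; move: x_notin; rewrite in_cons negb_or => /andP[->].
Qed.

End WalkEdges.

Definition walk_weight (R : numDomainType) (n : nat) (c : {set 'I_n.+1} -> R)
  (s : seq 'I_n.+1) : R := \sum_(e <- walk_edges s) c e.

Section WalkWeight.
Variables (R : numDomainType) (n : nat) (c : {set 'I_n.+1} -> R).

Lemma walk_weight_cons2 x y t :
  walk_weight c (x :: y :: t) = c [set x; y] + walk_weight c (y :: t).
Proof. by rewrite /walk_weight /= big_cons. Qed.

Lemma walk_weight_cat x s t :
  walk_weight c (x :: s ++ t) = walk_weight c (x :: s) + walk_weight c (last x s :: t).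
Proof. by rewrite /walk_weight /= pairmap_cat big_cat. Qed.

Lemma walk_weight_splice x s1 v y s2 :
  walk_weight c (x :: s1 ++ v :: y :: s2) =
  walk_weight c (x :: s1) + (c [set last x s1; v] + c [set v; y]) + walk_weight c (y :: s2).
Proof. by rewrite walk_weight_cat !walk_weight_cons2 !addrA. Qed.

Lemma dotE_incidence (s : seq 'I_n.+1) : uniq s -> dotE c (incidence R s) = walk_weight c s.
Proof.
move=> s_uniq; rewrite /dotE (bigID (mem (walk_edges s))) /=.
rewrite [X in _ + X]big1 => [|e /andP[_ /negbTE e_notin]]; last first.
  by rewrite /incidence e_notin mulr0.
rewrite addr0 /walk_weight (big_uniq _ (walk_edges_uniq s_uniq)).
apply: eq_big => [e|e /andP[_ e_in]]; last by rewrite /incidence e_in mulr1.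
by apply/andP/idP => [[]//|e_in]; rewrite e_in (walk_edges_is_edge s_uniq e_in).
Qed.

End WalkWeight.

Definition interior (n : nat) (v : 'I_n.+1) : bool := (0 < v < n)%N.

Section InteriorVertices.
Variable n : nat.

Lemma interior_path (mid : seq 'I_n.+1) :
  (0 < n)%N -> uniq mid -> all (@interior n) mid ->
  is_0n_p_path (size mid).+1 (ord0 :: mid ++ [:: ord_max]).
Proof.
move=> n_gt0 mid_uniq /allP mid_int; apply/and4P; split => //=.
- rewrite cats1 rcons_uniq mem_rcons in_cons mid_uniq andbT negb_or.
  rewrite -val_eqE /= eq_sym -lt0n n_gt0 /=.
  by apply/andP; split; apply/negP => /mid_int; rewrite /interior /=; lia.
- by rewrite size_cat addn1.
- by rewrite last_cat.
Qed.

Lemma exists_fresh_interior (S : seq 'I_n.+1) k :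
  uniq S -> all (@interior n) S -> (size S + k <= n - 1)%N ->
  exists r : seq 'I_n.+1,
    [/\ size r = k, uniq (S ++ r) & all (@interior n) (S ++ r)].
Proof.
move=> S_uniq S_int size_le.
pose interiors := [seq inord i : 'I_n.+1 | i <- iota 1 (n - 1)].
have interiors_uniq : uniq interiors.
  rewrite map_inj_in_uniq ?iota_uniq // => i j; rewrite !mem_iota => i_in j_in.
  by move=> /(congr1 val); rewrite /= !inordK; lia.
have interiors_int : all (@interior n) interiors.
  by apply/allP => v /mapP[i]; rewrite mem_iota => i_in ->; rewrite /interior inordK; lia.
pose fresh := filter (predC (mem S)) interiors.
have size_fresh : (k <= size fresh)%N.
  have : (count (mem S) interiors <= size S)%N.
    rewrite -size_filter; apply: uniq_leq_size; first exact: filter_uniq.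
    by move=> v; rewrite mem_filter => /andP[].
  by have := count_predC (mem S) interiors; rewrite size_map size_iota size_filter; lia.
exists (take k fresh); split; first exact: size_takel.
- rewrite cat_uniq S_uniq (take_uniq _ (filter_uniq _ interiors_uniq)) andbT.
  by apply/hasPn => v /mem_take; rewrite mem_filter => /andP[].
- rewrite all_cat S_int; apply/allP => v /mem_take; rewrite mem_filter.
  by case/andP => _ /(allP interiors_int).
Qed.

End InteriorVertices.

Section ConstantPathCost.
Variables (R : realFieldType) (n p : nat) (c : {set 'I_n.+1} -> R) (c0 : R).
Hypotheses (n_ge6 : (6 <= n)%N) (p_ge4 : (4 <= p)%N) (p_le : (p <= n - 1)%N).
Hypothesis path_cost :
  forall s : seq 'I_n.+1, is_0n_p_path p s -> dotE c (incidence R s) = c0.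

Lemma path_vertex_exchange x s1 v u y s2 :
  is_0n_p_path p (x :: s1 ++ v :: y :: s2) ->
  is_0n_p_path p (x :: s1 ++ u :: y :: s2) ->
  c [set last x s1; v] + c [set v; y] = c [set last x s1; u] + c [set u; y].
Proof.
move=> path_v path_u.
have := path_cost path_u; rewrite -(path_cost path_v).
case/and4P: path_u => uniq_u _ _ _; case/and4P: path_v => uniq_v _ _ _.
by rewrite !dotE_incidence // !walk_weight_splice => /addIr /addrI.
Qed.

Lemma interior_vertex_exchange pre post v u :
  uniq (v :: u :: pre ++ post) -> all (@interior n) (v :: u :: pre ++ post) ->
  (size pre + size post).+2 = p ->
  c [set last ord0 pre; v] + c [set v; head ord_max post] =
  c [set last ord0 pre; u] + c [set u; head ord_max post].
Proof.
move=> vu_uniq vu_int size_p.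
have path_with w : w \in [:: v; u] ->
    is_0n_p_path p (ord0 :: pre ++ w :: post ++ [:: ord_max]).
  move=> w_vu; rewrite -[w :: _ ++ _]cat_cons catA.
  have -> : p = (size (pre ++ w :: post)).+1 by rewrite size_cat /= -size_p addnS.
  have mid_perm : perm_eq (pre ++ w :: post) (w :: pre ++ post) by rewrite -cat1s perm_catCA.
  have w_sub : subseq (w :: pre ++ post) (v :: u :: pre ++ post).
    move: w_vu; rewrite !inE => /orP[] /eqP->; last exact: subseq_cons.
    by apply: (@cat_subseq _ [:: v] _ [:: v]) => //; apply: subseq_cons.
  apply: interior_path; first lia.
  - by rewrite (perm_uniq mid_perm) (subseq_uniq w_sub).
  - by rewrite (perm_all _ mid_perm); apply/allP => x /(mem_subseq w_sub); apply/allP.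
case: post vu_uniq vu_int size_p path_with => [|y post] _ _ _ path_with;
  by apply: path_vertex_exchange; apply: path_with; rewrite !inE eqxx ?orbT.
Qed.

Lemma interior_two_step_exchange x a u y :
  uniq [:: a; u; x; y] -> all (@interior n) [:: a; u; x; y] ->
  c [set x; a] + c [set a; y] = c [set x; u] + c [set u; y].
Proof.
move=> S_uniq S_int.
have [r [size_r r_uniq r_int]] :=
  @exists_fresh_interior n _ (p - 4) S_uniq S_int ltac:(rewrite /=; lia).
apply: (@interior_vertex_exchange [:: x] (y :: r)) => //.
by rewrite /= size_r; lia.
Qed.

Lemma disjoint_interior_edges_cost a b u v :
  uniq [:: a; b; u; v] -> all (@interior n) [:: a; b; u; v] ->
  c [set a; b] = c [set u; v].
Proof.
move=> S_uniq /and5P[a_int b_int u_int v_int _].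
have exchange_a : c [set u; a] + c [set a; b] = c [set u; v] + c [set v; b].
  apply: interior_two_step_exchange; last by rewrite /= a_int b_int u_int v_int.
  by move: S_uniq; rewrite /= !inE -!val_eqE; lia.
have exchange_b : c [set v; b] + c [set b; a] = c [set v; u] + c [set u; a].
  apply: interior_two_step_exchange; last by rewrite /= a_int b_int u_int v_int.
  by move: S_uniq; rewrite /= !inE -!val_eqE; lia.
move: exchange_b; rewrite [[set b; a]]setUC [[set v; u]]setUC; lra.
Qed.

Lemma adjacent_interior_edges_cost a b d :
  a != b -> a != d -> all (@interior n) [:: a; b; d] ->
  c [set a; b] = c [set a; d].
Proof.
have [-> //|bd ab ad S_int] := eqVneq b d.
have S_uniq : uniq [:: a; b; d] by rewrite /= !inE negb_or ab ad bd.
have [r [size_r r_uniq r_int]] :=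
  @exists_fresh_interior n _ 2 S_uniq S_int ltac:(rewrite /=; lia).
case: r size_r r_uniq r_int => [|e [|f []]] // _ r_uniq r_int.
move: r_int => /and5P[a_int b_int d_int e_int /andP[f_int _]].
have disjoint_ef x : x \in [:: b; d] -> c [set a; x] = c [set e; f].
  rewrite !inE => x_bd; apply: disjoint_interior_edges_cost.
    by move: r_uniq x_bd; rewrite /= !inE -!val_eqE; lia.
  by case/orP: x_bd => /eqP->; rewrite /= a_int e_int f_int ?b_int ?d_int.
by rewrite !disjoint_ef // !inE eqxx ?orbT.
Qed.

Lemma interior_edge_cost a b u v :
  interior a -> interior b -> interior u -> interior v -> a != b -> u != v ->
  c [set a; b] = c [set u; v].
Proof.
move=> a_int b_int u_int v_int ab uv; rewrite [[set u; v]]setUC.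
case: (eqVneq a v) ab a_int => [-> vb _|av ab a_int].
  apply: adjacent_interior_edges_cost => //; first by rewrite eq_sym.
  by rewrite /= v_int b_int u_int.
rewrite (@adjacent_interior_edges_cost a b v) //; last by rewrite /= a_int b_int v_int.
rewrite setUC; apply: adjacent_interior_edges_cost; rewrite 1?eq_sym //.
by rewrite /= v_int a_int u_int.
Qed.

Lemma first_edge_cost i j :
  interior i -> interior j -> c [set ord0; i] = c [set ord0; j].
Proof.
move=> i_int j_int; have [-> //|ij] := eqVneq i j.
have ij_uniq : uniq [:: i; j] by rewrite /= inE ij.
have ij_int : all (@interior n) [:: i; j] by rewrite /= i_int j_int.
have [r [size_r r_uniq r_int]] :=
  @exists_fresh_interior n _ (p - 2) ij_uniq ij_int ltac:(rewrite /=; lia).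
case: r size_r r_uniq r_int => [|w r] size_r r_uniq r_int; first by move: size_r => /=; lia.
have size_p : (size (w :: r)).+2 = p by rewrite size_r; lia.
have w_int : interior w by move: r_int => /and4P[_ _ ->].
have [iw jw] : i != w /\ j != w by move: r_uniq; rewrite /= !inE -!val_eqE; lia.
have := @interior_vertex_exchange [::] (w :: r) i j r_uniq r_int size_p.
by rewrite /= (@interior_edge_cost i w j w) // => /addIr.
Qed.

Lemma last_edge_cost i j :
  interior i -> interior j -> c [set i; ord_max] = c [set j; ord_max].
Proof.
move=> i_int j_int; have [-> //|ij] := eqVneq i j.
have ij_uniq : uniq [:: i; j] by rewrite /= inE ij.
have ij_int : all (@interior n) [:: i; j] by rewrite /= i_int j_int.
have [r [size_r r_uniq r_int]] :=
  @exists_fresh_interior n _ (p - 2) ij_uniq ij_int ltac:(rewrite /=; lia).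
case/lastP: r size_r r_uniq r_int => [|r w] size_r r_uniq r_int; first by move: size_r => /=; lia.
have size_p : (size (rcons r w) + 0).+2 = p by rewrite size_r; lia.
have w_int : interior w by move: r_int; rewrite /= all_rcons => /and4P[_ _ ->].
have [wi wj] : w != i /\ w != j.
  by move: r_uniq; rewrite /= !inE !mem_rcons !inE -!val_eqE; lia.
rewrite -(cats0 (rcons r w)) in r_uniq r_int.
have := @interior_vertex_exchange (rcons r w) [::] i j r_uniq r_int size_p.
by rewrite /= last_rcons (@interior_edge_cost w i w j) // => /addrI.
Qed.

End ConstantPathCost.

Theorem lemmaU1 (R : realFieldType) (n p : nat) (c : {set 'I_n.+1} -> R) (c0 : R) :
  (6 <= n)%N -> (4 <= p)%N -> (p <= n - 1)%N ->
  (forall s : seq 'I_n.+1, @is_0n_p_path n p s ->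
     dotE c (incidence R s) = c0) ->
  exists alpha beta gamma : R,
    (forall i : 'I_n.+1, (0 < i < n)%N ->
       c [set ord0; i] = alpha /\ c [set i; ord_max] = beta) /\
    (forall i j : 'I_n.+1, (0 < i < n)%N -> (0 < j < n)%N -> i != j ->
       c [set i; j] = gamma).
Proof.
move=> n_ge6 p_ge4 p_le path_cost.
have first_edge := first_edge_cost n_ge6 p_ge4 p_le path_cost.
have last_edge := last_edge_cost n_ge6 p_ge4 p_le path_cost.
have interior_edge := interior_edge_cost n_ge6 p_ge4 p_le path_cost.
pose i1 : 'I_n.+1 := inord 1; pose i2 : 'I_n.+1 := inord 2.
have i1_int : interior i1 by rewrite /interior inordK; lia.
have i2_int : interior i2 by rewrite /interior inordK; lia.
have i1_i2 : i1 != i2 by rewrite -val_eqE /= !inordK; lia.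
exists (c [set ord0; i1]), (c [set i1; ord_max]), (c [set i1; i2]).
split=> [i i_int | i j i_int j_int ij].
  by split; [apply: first_edge | apply: last_edge].
exact: interior_edge.
Qed.
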